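(* Let $n\ge1$. A signed permutation $\pi\in\mathfrak B_n$ is a type B André permutation if and only if every inner node of the tree $T_\pi\in\mathcal{BHR}_n$ is a min-node.
   Context: $\mathfrak B_n$ is the set of signed permutations $\pi=\pi_1\cdots\pi_n$ (words over $\{\pm1,\dots,\pm n\}$ with $|\pi_1|,\dots,|\pi_n|$ a permutation of $[n]$), compared as integers; always set $\pi_0=0$. Trees are rooted binary trees with each child designated left or right. A min–max tree on a totally ordered label set is labeled bijectively so that each node's label is the minimum or maximum of its subtree's labels. A node with a child is inner; an inner node is a min-node (resp. max-node) if its label is the minimum (resp. maximum) of its subtree. An HR-tree is a min–max tree in which every inner node $s$ has a nonempty right subtree containing the maximum label of the subtree of $s$ if $s$ is a min-node, the minimum if $s$ is a max-node. The reading word is the in-order reading $w(T)=w(L)\,\ell_{\mathrm{root}}\,w(R)$. $\mathcal{BHR}_n$ is the set of HR-trees whose label set is $\{0,s_1,\dots,s_n\}$ with $s_i\in\{i,-i\}$, such that $0$ is the first letter of $w(T)$; $T\mapsto w(T)=0\pi_1\cdots\pi_n$ is a bijection $\mathcal{BHR}_n\to\mathfrak B_n$, and $T_\pi$ denotes the tree with $w(T_\pi)=0\pi_1\cdots\pi_n$. For the word $0\pi_1\cdots\pi_n$ and an index $i\in[n]$, the $\pi_i$-factorization is $0\pi_1\cdots\pi_n=w_1w_2\pi_iw_4w_5$ where $w_2$ is the longest factor ending just before $\pi_i$ all of whose letters exceed $\pi_i$ and $w_4$ is the longest factor starting just after $\pi_i$ all of whose letters exceed $\pi_i$. $\pi\in\mathfrak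 B_n$ is a type B André permutation if (i) there is no $i\in\{1,\dots,n-1\}$ with $\pi_{i-1}>\pi_i>\pi_{i+1}$, (ii) $\pi_{n-1}<\pi_n$ (with $\pi_0=0$), and (iii) for every valley $i\in\{1,\dots,n-1\}$ (i.e. $\pi_{i-1}>\pi_i<\pi_{i+1}$), the maximum letter of $w_2$ is smaller than the maximum letter of $w_4$ in the $\pi_i$-factorization. (E.g. for $n=2$ these are $12$, $\bar12$, $\bar21$, where $\bar k=-k$.) *)

From mathcomp Require Import all_boot all_order all_algebra.
Set Implicit Arguments. Unset Strict Implicit. Unset Printing Implicit Defensive.
Import Order.TTheory GRing.Theory Num.Theory.
Local Open Scope ring_scope.

Definition signed_perm (n : nat) (pi : seq int) : Prop :=
  size pi = n /\ perm_eq [seq absz x | x <- pi] (iota 1 n).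

Inductive tree : Type :=
  | Leaf : tree
  | Node : tree -> int -> tree -> tree.

Fixpoint inorder (t : tree) : seq int :=
  match t with
  | Leaf => [::]
  | Node l x r => inorder l ++ x :: inorder r
  end.

Definition labels (t : tree) : seq int := inorder t.

Definition is_min_of (x : int) (s : seq int) : bool := all (fun y => x <= y) s.
Definition is_max_of (x : int) (s : seq int) : bool := all (fun y => y <= x) s.

Definition nonempty (t : tree) : bool := if t is Leaf then false else true.

Definition inner (l r : tree) : bool := nonempty l || nonempty r.

Fixpoint minmax_nodes (t : tree) : bool :=
  match t with
  | Leaf => true
  | Node l x r =>
      [&& (is_min_of x (labels t) || is_max_of x (labels t)),
          minmax_nodes l & minmax_nodes r]
  end.

Definition minmax_tree (t : tree) : bool := uniq (labels t) && minmax_nodes t.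

Fixpoint HR_nodes (t : tree) : bool :=
  match t with
  | Leaf => true
  | Node l x r =>
      [&& (inner l r ==>
            [&& nonempty r,
                (is_min_of x (labels t) ==>
                   has (fun y => is_max_of y (labels t)) (labels r))
              & (is_max_of x (labels t) ==>
                   has (fun y => is_min_of y (labels t)) (labels r))]),
          HR_nodes l & HR_nodes r]
  end.

Definition HR_tree (t : tree) : bool := minmax_tree t && HR_nodes t.

Definition BHR (n : nat) (t : tree) : Prop :=
  [/\ HR_tree t,
      (exists s : seq int,
         [/\ size s = n,
             (forall i : nat, (i < n)%N -> absz (nth 0 s i) = i.+1)
           & perm_eq (labels t) (0 :: s)])
    & head 1 (inorder t) = 0].

Fixpoint all_inner_min (t : tree) : bool :=
  match t with
  | Leaf => true
  | Node l x r =>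
      [&& (inner l r ==> is_min_of x (labels t)),
          all_inner_min l & all_inner_min r]
  end.

Definition seqmax (s : seq int) : int := foldr Num.max (head 0 s) s.

Definition prefix_gt (x : int) (s : seq int) : seq int :=
  take (find (fun y => ~~ (x < y)) s) s.

(* For w = 0 pi_1 ... pi_n and index i: the factors w_2 and w_4 of the
   pi_i-factorization w = w_1 w_2 pi_i w_4 w_5. *)
Definition fact_w2 (w : seq int) (i : nat) : seq int :=
  rev (prefix_gt (nth 0 w i) (rev (take i w))).
Definition fact_w4 (w : seq int) (i : nat) : seq int :=
  prefix_gt (nth 0 w i) (drop i.+1 w).

(* type B André permutation, with pi_0 = 0, w = 0 pi_1 ... pi_n,
   nth 0 w i = pi_i *)
Definition andre_B (n : nat) (pi : seq int) : Prop :=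
  let w := 0 :: pi in
  let p := fun i => nth 0 w i in
  [/\ (forall i : nat, (0 < i < n)%N -> ~ (p i.-1 > p i /\ p i > p i.+1)),
      p n.-1 < p n
    & (forall i : nat, (0 < i < n)%N -> p i.-1 > p i -> p i < p i.+1 ->
         seqmax (fact_w2 w i) < seqmax (fact_w4 w i))].

From mathcomp Require Import all_boot all_order all_algebra zify.
Set Implicit Arguments. Unset Strict Implicit. Unset Printing Implicit Defensive.
Import Order.TTheory GRing.Theory Num.Theory.
Local Open Scope ring_scope.

(* If m is the minimum of a word u m v, every factorization around a letter of
   u or of v stops at m, so u m v is André exactly when u and v are, v is
   nonempty and, at the valley m, max u < max v.  At
   a min-node the right subtree holds the maximum, which gives max u < max v, so
   by induction a tree of min-nodes reads an André word.  At a max-node x the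
   right subtree holds the minimum y; the factorization at y has x on its left
   and only smaller letters on its right, so max w_2 >= x >= max w_4. *)

Lemma prefix_gt_all (x : int) s : all (fun y => x < y) s -> prefix_gt x s = s.
Proof.
move=> s_gt; rewrite /prefix_gt (@hasNfind _ _ s) ?take_size //.
by apply/hasPn => y /(allP s_gt) ->.
Qed.

Lemma prefix_gt_cat (x y : int) s t :
  ~~ (x < y) -> prefix_gt x (s ++ y :: t) = prefix_gt x s.
Proof.
move=> y_le; rewrite /prefix_gt find_cat; case: ifP => has_s.
  by rewrite take_cat ifT // -has_find.
rewrite /= y_le addn0 take_size_cat // hasNfind ?has_s ?take_size //.
Qed.

Lemma foldr_max_ub (a : int) s : all (fun y => y <= foldr Num.max a s) s.
Proof.
elim: s => //= y s IH; rewrite le_max lexx /=.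
by apply/allP => z /(allP IH) le_z; rewrite le_max le_z orbT.
Qed.

Lemma foldr_max_mem (a : int) s : foldr Num.max a s \in a :: s.
Proof.
elim: s => [|y s IH] /=; first by rewrite inE.
case: leP => _; last by rewrite !inE eqxx orbT.
by move: IH; rewrite !inE => /orP[] ->; rewrite ?orbT.
Qed.

Lemma seqmax_mem s : s != [::] -> seqmax s \in s.
Proof.
case: s => [//|a s] _; have := foldr_max_mem a (a :: s).
by rewrite /seqmax /= inE => /predU1P[->|//]; rewrite inE eqxx.
Qed.

Lemma seqmax_ub s y : y \in s -> y <= seqmax s.
Proof. exact: (allP (foldr_max_ub _ _)). Qed.

Lemma seqmax_lt (u v : seq int) (y : int) :
  u != [::] -> y \in v -> y \notin u -> all (fun z => z <= y) u ->
  seqmax u < seqmax v.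
Proof.
move=> u_ne yv yNu u_le; have max_u := seqmax_mem u_ne.
apply: lt_le_trans (seqmax_ub yv); rewrite lt_neqAle (allP u_le _ max_u) andbT.
by apply: contraNneq yNu => <-.
Qed.

Lemma min_of_uniq_lt (a b : seq int) (y : int) :
  uniq (a ++ y :: b) -> is_min_of y (a ++ y :: b) -> all (fun z => y < z) (a ++ b).
Proof.
rewrite cat_uniq /= => /and3P[_ /norP[yNa _] /andP[yNb _]] /allP y_min.
apply/allP => z z_ab; rewrite lt_neqAle y_min ?andbT.
  by apply: contraTneq z_ab => <-; rewrite mem_cat negb_or yNa.
by move: z_ab; rewrite !mem_cat inE => /orP[] ->; rewrite ?orbT.
Qed.

Definition andre_at (w : seq int) (i : nat) : Prop :=
  ~ (nth 0 w i.-1 > nth 0 w i /\ nth 0 w i > nth 0 w i.+1) /\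
  (nth 0 w i.-1 > nth 0 w i -> nth 0 w i < nth 0 w i.+1 ->
     seqmax (fact_w2 w i) < seqmax (fact_w4 w i)).

Definition ends_with_ascent (w : seq int) : bool :=
  nth 0 w (size w).-2 < nth 0 w (size w).-1.

(* The conditions of [andre_B] on a word w_0 ... w_k; words of length at most
   one count as André, so that the decomposition below allows empty factors. *)
Definition andre_word (w : seq int) : Prop :=
  (size w <= 1)%N \/
  (forall i, (0 < i < (size w).-1)%N -> andre_at w i) /\ ends_with_ascent w.

Section CatMin.
Variables (u v : seq int) (m : int).
Hypothesis m_lt : all (fun y => m < y) (u ++ v).
Local Notation w := (u ++ m :: v).

Lemma min_lt_l y : y \in u -> m < y.
Proof. by move=> yu; apply: (allP m_lt); rewrite mem_cat yu. Qed.

Lemma min_lt_r y : y \in v -> m < y.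
Proof. by move=> yv; apply: (allP m_lt); rewrite mem_cat yv orbT. Qed.

Lemma nth_cat_min_l i : (i < size u)%N -> nth 0 w i = nth 0 u i.
Proof. by move=> lt_i; rewrite nth_cat lt_i. Qed.

Lemma nth_cat_min_mid : nth 0 w (size u) = m.
Proof. by rewrite nth_cat ltnn subnn. Qed.

Lemma nth_cat_min_r j : nth 0 w (size u + j.+1) = nth 0 v j.
Proof. by rewrite nth_cat ltnNge leq_addr /= addKn. Qed.

Lemma fact_cat_min_l i : (i < size u)%N ->
  fact_w2 w i = fact_w2 u i /\ fact_w4 w i = fact_w4 u i.
Proof.
move=> lt_i; rewrite /fact_w2 /fact_w4 nth_cat_min_l // take_cat lt_i.
split=> //; have -> : drop i.+1 (u ++ m :: v) = drop i.+1 u ++ m :: v.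
  rewrite drop_cat; case: ltnP => // le_u.
  by rewrite (drop_oversize le_u) (_ : i.+1 = size u) ?subnn //; lia.
by rewrite prefix_gt_cat // -leNgt ltW // min_lt_l ?mem_nth.
Qed.

Lemma fact_cat_min_mid : fact_w2 w (size u) = u /\ fact_w4 w (size u) = v.
Proof.
rewrite /fact_w2 /fact_w4 nth_cat_min_mid take_size_cat // drop_cat ltnNge.
rewrite leqnSn /= subSn // subnn /= drop0 !prefix_gt_all ?revK //.
  by apply/allP => y /min_lt_r.
by apply/allP => y; rewrite mem_rev => /min_lt_l.
Qed.

Lemma fact_cat_min_r j : (j < size v)%N ->
  fact_w2 w (size u + j.+1) = fact_w2 v j /\
  fact_w4 w (size u + j.+1) = fact_w4 v j.
Proof.
move=> lt_j; rewrite /fact_w2 /fact_w4 nth_cat_min_r take_cat drop_cat.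
rewrite ltnNge leq_addr /= -addnS ltnNge leq_addr /= !addKn /=.
rewrite rev_cat rev_cons cat_rcons prefix_gt_cat //.
by rewrite -leNgt ltW // min_lt_r ?mem_nth.
Qed.

Lemma andre_at_cat_min_l i : (i.+1 < size u)%N -> andre_at w i <-> andre_at u i.
Proof.
move=> lt_i; have [e2 e4] := fact_cat_min_l (ltnW lt_i).
by rewrite /andre_at e2 e4 !nth_cat_min_l //; lia.
Qed.

Lemma andre_at_cat_min_r j : (0 < j < size v)%N ->
  andre_at w (size u + j.+1) <-> andre_at v j.
Proof.
case: j => [//|j] /= lt_j; have [e2 e4] := fact_cat_min_r lt_j.
rewrite /andre_at e2 e4 (_ : (size u + j.+2).-1 = size u + j.+1)%N ?addnS //.
by rewrite -!addnS !nth_cat_min_r.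
Qed.

Lemma andre_at_cat_min_last_l : uniq u -> (1 < size u)%N ->
  andre_at w (size u).-1 <-> ends_with_ascent u.
Proof.
rewrite /ends_with_ascent => uniq_u; case sz_u: (size u) => [|[|k]] // _ /=.
have mid : nth 0 w k.+2 = m by rewrite -sz_u nth_cat_min_mid.
rewrite /andre_at mid !nth_cat_min_l ?sz_u //.
have m_lt_last : m < nth 0 u k.+1 by rewrite min_lt_l ?mem_nth ?sz_u.
have neq : nth 0 u k != nth 0 u k.+1 by rewrite nth_uniq ?sz_u // neq_ltn ltnSn.
split=> [[no_dd _] | asc].
  by rewrite lt_neqAle neq leNgt /=; apply/negP => desc; exact: no_dd.
split=> [[desc _] | _ last_lt_m]; first by move: (lt_trans desc asc); rewrite ltxx.
by move: (lt_trans m_lt_last last_lt_m); rewrite ltxx.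
Qed.

Lemma andre_at_cat_min_mid : u != [::] -> v != [::] ->
  andre_at w (size u) <-> seqmax u < seqmax v.
Proof.
rewrite -!size_eq0 -!lt0n => u_ne v_ne; have [e2 e4] := fact_cat_min_mid.
have lt_r : m < nth 0 w (size u).+1.
  by rewrite -addn1 nth_cat_min_r min_lt_r ?mem_nth.
have lt_l : m < nth 0 w (size u).-1.
  by rewrite nth_cat_min_l ?min_lt_l ?mem_nth ?ltn_predL.
rewrite /andre_at e2 e4 nth_cat_min_mid; split=> [[_ /(_ lt_l lt_r)] // | max_lt].
by split=> // -[_ gt_r]; move: (lt_trans gt_r lt_r); rewrite ltxx.
Qed.

Lemma andre_at_cat_min_first_r : v != [::] -> andre_at w (size u).+1.
Proof.
rewrite -size_eq0 -lt0n => v_ne.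
have lt_r : m < nth 0 w (size u).+1.
  by rewrite -addn1 nth_cat_min_r min_lt_r ?mem_nth.
rewrite /andre_at /= nth_cat_min_mid.
by split=> [[/lt_trans/(_ lt_r)] | /lt_trans/(_ lt_r)]; rewrite ltxx.
Qed.

Lemma ends_with_ascent_cat_min_r : (1 < size v)%N ->
  ends_with_ascent w = ends_with_ascent v.
Proof.
case sz_v: (size v) => [|[|k]] // _; rewrite /ends_with_ascent size_cat /= sz_v.
by rewrite !addnS /= -!addnS !nth_cat_min_r.
Qed.

Lemma ends_with_ascent_cat_min_nil : v = [::] -> u != [::] -> ~~ ends_with_ascent w.
Proof.
move=> v_nil u_ne; have sz_v : size v = 0%N by rewrite v_nil.
rewrite /ends_with_ascent size_cat /= sz_v addn1 /= nth_cat_min_mid.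
rewrite nth_cat_min_l -?leNgt ?ltW ?min_lt_l ?mem_nth //.
all: by rewrite ltn_predL lt0n size_eq0.
Qed.

Lemma ends_with_ascent_cat_min_single : size v = 1%N -> ends_with_ascent w.
Proof.
move=> sz_v; rewrite /ends_with_ascent size_cat /= sz_v addn2 /= nth_cat_min_mid.
by rewrite -addn1 nth_cat_min_r min_lt_r ?mem_nth ?sz_v.
Qed.

End CatMin.

Lemma andre_word_cat_min_inv (u v : seq int) (m : int) :
  all (fun y => m < y) (u ++ v) -> uniq u -> (0 < size u + size v)%N ->
  andre_word (u ++ m :: v) ->
  [/\ v != [::], (u != [::] -> seqmax u < seqmax v), andre_word u & andre_word v].
Proof.
move=> m_lt uniq_u sz_uv [|[andre_w asc_w]]; first by rewrite size_cat /=; lia.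
rewrite (_ : (size _).-1 = size u + size v)%N ?size_cat ?addnS // in andre_w.
have v_ne : v != [::].
  apply: contraTneq asc_w => v_nil; apply: (ends_with_ascent_cat_min_nil m_lt v_nil).
  by apply: contraTneq sz_uv => u_nil; rewrite u_nil v_nil.
split=> //.
- move=> u_ne; apply/(andre_at_cat_min_mid m_lt u_ne v_ne)/andre_w.
  by rewrite lt0n size_eq0 u_ne -{1}[size u]addn0 ltn_add2l lt0n size_eq0.
- case: (leqP (size u) 1) => [|gt1_u]; [by left | right]; split.
    move=> i lt_i; have lt_iu : (i.+1 < size u)%N by lia.
    apply/(andre_at_cat_min_l m_lt lt_iu).1/andre_w; lia.
  apply/(andre_at_cat_min_last_l m_lt uniq_u gt1_u).1/andre_w; lia.
- case: (leqP (size v) 1) => [|gt1_v]; [by left | right]; split.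
    move=> j lt_j; have lt_jv : (0 < j < size v)%N by lia.
    apply/(andre_at_cat_min_r m_lt lt_jv).1/andre_w; lia.
  by rewrite -(ends_with_ascent_cat_min_r u m gt1_v).
Qed.

Lemma andre_at_cat_min (u v : seq int) (m : int) :
  all (fun y => m < y) (u ++ v) -> uniq u -> v != [::] ->
  (u != [::] -> seqmax u < seqmax v) -> andre_word u -> andre_word v ->
  forall i, (0 < i < size u + size v)%N -> andre_at (u ++ m :: v) i.
Proof.
move=> m_lt uniq_u v_ne max_lt andre_u andre_v i lt_i.
case: (ltngtP i.+1 (size u)) => [lt_iu | le_ui | eq_iu].
- case: andre_u => [|[andre_u _]]; first lia.
  by apply/(andre_at_cat_min_l m_lt lt_iu).2/andre_u; lia.
- have -> : i = (size u + (i - size u))%N by lia.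
  case e: (i - size u)%N => [|[|j]].
  + have sz_u : (0 < size u)%N by lia.
    have u_ne : u != [::] by rewrite -size_eq0 -lt0n.
    by rewrite addn0; apply/(andre_at_cat_min_mid m_lt u_ne v_ne).2/max_lt.
  + by rewrite addn1; apply: andre_at_cat_min_first_r.
  + have lt_jv : (0 < j.+1 < size v)%N by lia.
    case: andre_v => [|[andre_v _]]; first lia.
    by apply/(andre_at_cat_min_r m_lt lt_jv).2/andre_v; lia.
- have gt1_u : (1 < size u)%N by lia.
  case: andre_u => [|[_ asc_u]]; first lia.
  have -> : i = (size u).-1 by lia.
  exact/(andre_at_cat_min_last_l m_lt uniq_u gt1_u).2.
Qed.

Lemma andre_word_cat_min (u v : seq int) (m : int) :
  all (fun y => m < y) (u ++ v) -> uniq u -> v != [::] ->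
  (u != [::] -> seqmax u < seqmax v) -> andre_word u -> andre_word v ->
  andre_word (u ++ m :: v).
Proof.
move=> m_lt uniq_u v_ne max_lt andre_u andre_v; right; split.
  by rewrite size_cat addnS; apply: andre_at_cat_min.
case: (ltngtP (size v) 1) => [|gt1_v | /ends_with_ascent_cat_min_single -> //].
  by rewrite ltnS leqn0 size_eq0 (negbTE v_ne).
case: andre_v => [|[_ asc_v]]; first lia.
by rewrite (ends_with_ascent_cat_min_r u m gt1_v).
Qed.

Lemma not_andre_word_max_before_min (u v : seq int) (x y : int) :
  uniq (u ++ x :: v) -> is_max_of x (u ++ x :: v) ->
  y \in v -> is_min_of y (u ++ x :: v) -> ~ andre_word (u ++ x :: v).
Proof.
move=> uniq_w x_max yv; case/splitPr: yv uniq_w x_max => v1 v2.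
rewrite -cat_cons catA => uniq_w x_max y_min andre_w.
have uniq_u : uniq (u ++ x :: v1) by move: uniq_w; rewrite cat_uniq => /andP[].
have sz : (0 < size (u ++ x :: v1) + size v2)%N by rewrite size_cat /= addnS addSn.
have [v2_ne max_lt _ _] :=
  andre_word_cat_min_inv (min_of_uniq_lt uniq_w y_min) uniq_u sz andre_w.
have x_le : x <= seqmax (u ++ x :: v1) by rewrite seqmax_ub // mem_cat mem_head orbT.
have le_x : seqmax v2 <= x.
  by apply: (allP x_max); rewrite mem_cat inE (seqmax_mem v2_ne) !orbT.
have ux_ne : u ++ x :: v1 != [::] by case: (u).
by have := le_lt_trans x_le (lt_le_trans (max_lt ux_ne) le_x); rewrite ltxx.
Qed.

Lemma all_inner_min_andre_word (t : tree) :
  uniq (inorder t) -> minmax_nodes t -> HR_nodes t ->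
  all_inner_min t <-> andre_word (inorder t).
Proof.
elim: t => [|l IHl x r IHr] /=; first by split=> // _; left.
rewrite /labels /= => uniq_w /and3P[x_mm mm_l mm_r] /and3P[hr_x hr_l hr_r].
set u := inorder l in uniq_w x_mm hr_x IHl *.
set v := inorder r in uniq_w x_mm hr_x IHr *.
have uniq_u : uniq u by move: uniq_w; rewrite cat_uniq => /andP[].
have uniq_v : uniq v by move: uniq_w; rewrite cat_uniq => /and3P[_ _ /andP[]].
have {}IHl := IHl uniq_u mm_l hr_l; have {}IHr := IHr uniq_v mm_r hr_r.
case: (boolP (inner l r)) hr_x => [_ | leaf_x] /=; last first.
  have [l_leaf r_leaf] : l = Leaf /\ r = Leaf.
    by move: leaf_x; rewrite /inner; case: (l); case: (r).
  by rewrite /u /v l_leaf r_leaf /=; split=> // _; left.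
case/and3P=> r_ne min_x max_x; have v_ne : v != [::].
  by move: r_ne; rewrite /v; case: (r) => //= l' y r' _; case: (inorder l').
case x_min: (is_min_of x (u ++ x :: v)); last first.
  move: x_mm; rewrite x_min /= => x_max.
  move: max_x; rewrite x_max /= => /hasP[y yv y_min].
  by split=> // /(not_andre_word_max_before_min uniq_w x_max yv y_min).
have m_lt := min_of_uniq_lt uniq_w x_min.
split=> [/and3P[_ /IHl andre_u /IHr andre_v] | ].
  apply: andre_word_cat_min => // u_ne.
  move: min_x; rewrite x_min => /hasP[y yv y_max]; apply: (seqmax_lt u_ne yv).
    by move: uniq_w; rewrite cat_uniq /= => /and3P[_ /norP[_ /hasPn/(_ y yv)]].
  by apply/allP => z zu; apply: (allP y_max); rewrite mem_cat zu.
have sz : (0 < size u + size v)%N by rewrite addn_gt0 orbC lt0n size_eq0 v_ne.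
by case/(andre_word_cat_min_inv m_lt uniq_u sz) => _ _ /IHl-> /IHr->.
Qed.

Lemma andre_B_andre_word (n : nat) (pi : seq int) :
  (1 <= n)%N -> size pi = n -> andre_B n pi <-> andre_word (0 :: pi).
Proof.
move=> n_gt0 sz_pi; rewrite /andre_B /andre_word /ends_with_ascent /andre_at /= sz_pi.
split=> [[no_dd asc valley] | [n_le0 | [andre_w asc]]].
- by right; split=> // i lt_i; split; [exact: no_dd | exact: valley].
- lia.
- by split=> // i lt_i; have [] := andre_w i lt_i.
Qed.

Theorem mainTheorem8 (n : nat) (pi : seq int) (T : tree) :
  (1 <= n)%N -> signed_perm n pi -> BHR n T -> inorder T = 0 :: pi ->
  (andre_B n pi <-> all_inner_min T).
Proof.
move=> n_gt0 [sz_pi _] [/andP[/andP[uniq_T mm_T] hr_T] _ _] T_pi.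
rewrite (andre_B_andre_word n_gt0 sz_pi).
by rewrite (all_inner_min_andre_word uniq_T mm_T hr_T) T_pi.
Qed.
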